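(* Let $\mathbb{X}^0_1=\mathbb{X}^1_1:=2^\omega$, $\mathbb{A}^0_1:=\{(0^\infty,0^\infty)\}$ and $\mathbb{A}^1_1:=\{(0^i1\alpha,0^i1\beta)\mid i\in\omega,\ \alpha,\beta\in2^\omega\}$. Let $X,Y$ be Polish spaces and $A_0,A_1$ disjoint subsets of $X\times Y$. Then exactly one of the following holds: (a) there is a countable union $S$ of sets $U\times V$ with $U$ open in $X$ and $V$ open in $Y$ such that $A_0\subseteq S$ and $S\cap A_1=\emptyset$; (b) there are continuous maps $f,g:2^\omega\to X,Y$ respectively (i.e. $f:2^\omega\to X$, $g:2^\omega\to Y$) such that $(f\times g)(\mathbb{A}^0_1)\subseteq A_0$ and $(f\times g)(\mathbb{A}^1_1)\subseteq A_1$.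
   Context: $0^i1\alpha$ denotes the element of $2^\omega$ consisting of $i$ zeros, then $1$, then $\alpha$; $0^\infty$ is the constant zero sequence. $(f\times g)(x,y)=(f(x),g(y))$. *)

From HB Require Import structures.
From mathcomp Require Import all_boot all_order all_algebra.
From mathcomp Require Import all_classical all_reals all_analysis.
From mathcomp Require Import Rstruct Rstruct_topology.
Set Implicit Arguments. Unset Strict Implicit. Unset Printing Implicit Defensive.
Import Order.TTheory GRing.Theory Num.Theory.
Local Open Scope classical_set_scope.
Local Open Scope ring_scope.

Section Polish.
Variable T : topologicalType.

Definition is_metric (d : T -> T -> Rdefinitions.R) : Prop :=
  [/\ (forall x y, 0 <= d x y),
      (forall x y, d x y = 0 <-> x = y),
      (forall x y, d x y = d y x) &
      (forall x y z, d x z <= d x y + d y z)].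

Definition dball (d : T -> T -> Rdefinitions.R) (x : T) (e : Rdefinitions.R) : set T := [set y | d x y < e].

Definition metric_compatible (d : T -> T -> Rdefinitions.R) : Prop :=
  forall A : set T, open A <-> (forall x, A x -> exists2 e : Rdefinitions.R, 0 < e & dball d x e `<=` A).

Definition d_cauchy (d : T -> T -> Rdefinitions.R) (u : nat -> T) : Prop :=
  forall e : Rdefinitions.R, 0 < e -> exists N : nat, forall m n : nat,
    (N <= m)%N -> (N <= n)%N -> d (u m) (u n) < e.

Definition d_complete (d : T -> T -> Rdefinitions.R) : Prop :=
  forall u : nat -> T, d_cauchy d u -> exists l : T, u @ \oo --> l.

Definition separable_space : Prop := exists D : set T, countable D /\ dense D.

Definition polish_space : Prop :=
  separable_space /\
  exists d : T -> T -> Rdefinitions.R, [/\ is_metric d, metric_compatible d & d_complete d].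
End Polish.

Definition zero_seq : cantor_space := fun _ => false.

Definition pad_seq (i : nat) (a : cantor_space) : cantor_space :=
  fun n => if (n < i)%N then false else if n == i then true else a (n - i.+1)%N.

Definition A01 : set (cantor_space * cantor_space) := [set (zero_seq, zero_seq)].
Definition A11 : set (cantor_space * cantor_space) :=
  [set p | exists (i : nat) (a b : cantor_space), p = (pad_seq i a, pad_seq i b)].

Definition prod_map (X Y : Type) (f : cantor_space -> X) (g : cantor_space -> Y)
  (p : cantor_space * cantor_space) : X * Y := (f p.1, g p.2).

From HB Require Import structures.
From mathcomp Require Import all_boot all_order all_algebra.
From mathcomp Require Import all_classical all_reals all_analysis.
From mathcomp Require Import Rstruct Rstruct_topology.
Import Order.TTheory GRing.Theory Num.Theory.
Set Implicit Arguments. Unset Strict Implicit. Unset Printing Implicit Defensive.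
Local Open Scope classical_set_scope.
Local Open Scope ring_scope.

(* Both alternatives are decided by whether A0 meets the closure of A1 in X * Y.
   If it does not, each point of A0 lies in a basic open rectangle missing A1, and
   second countability leaves only countably many such rectangles: this is (a).
   If (x, y) in A0 is the limit of points (u_i, v_i) of A1, the maps sending 0^oo
   to x (resp. y) and 0^i 1 alpha to u_i (resp. v_i) are continuous: this is (b).
   Conversely, (a) keeps A0 away from the closure of A1, while under (b) the
   points (f (0^i 1 0^oo), g (0^i 1 0^oo)) of A1 converge to the point
   (f 0^oo, g 0^oo) of A0. *)

Lemma cantor_prefix_nbhs (a : cantor_space) (n : nat) :
  nbhs a [set b : cantor_space | forall j, (j < n)%N -> b j = a j].
Proof.
elim: n => [|n IH]; first by apply: filterS filterT.
have agree_n : nbhs a [set b : cantor_space | b n = a n].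
  by apply: (@proj_continuous nat (fun=> bool) n a [set a n]); exact/principal_filterP.
apply: filterS (filterI IH agree_n) => b [agree_lt agree_eq] j.
by rewrite ltnS leq_eqVlt => /orP[/eqP->//|]; exact: agree_lt.
Qed.

Lemma pad_seq_zero_cvg : (pad_seq ^~ zero_seq) @ \oo --> zero_seq.
Proof.
apply/cvg_sup => j U [V] [[W] oW <-] WfN WU.
apply: (filterS WU); rewrite nbhs_simpl; exists j.+1 => // i /= ji.
by rewrite /pad_seq (leq_trans _ ji).
Qed.

Section CantorSelect.
Variables (T : Type) (x : T) (xs : nat -> T).

Definition cantor_select (a : cantor_space) : T :=
  if pselect (exists i, a i) is left h then xs (ex_minn h) else x.

Lemma cantor_select_first (a : cantor_space) i :
  a i -> (forall j, (j < i)%N -> ~~ a j) -> cantor_select a = xs i.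
Proof.
move=> ai before_i; rewrite /cantor_select; case: pselect => [h|[]]; last by exists i.
case: ex_minnP => m am m_min; congr (xs _); apply/eqP; rewrite eqn_leq m_min //=.
by rewrite leqNgt; apply/negP => /before_i; rewrite am.
Qed.

Lemma cantor_select_late (a : cantor_space) n :
  (forall j, (j < n)%N -> ~~ a j) ->
  cantor_select a = x \/ exists2 i, (n <= i)%N & cantor_select a = xs i.
Proof.
move=> before_n; rewrite /cantor_select; case: pselect => [h|_]; last by left.
right; case: ex_minnP => m am _; exists m => //.
by rewrite leqNgt; apply/negP => /before_n; rewrite am.
Qed.

Lemma cantor_select_none (a : cantor_space) : (forall j, ~~ a j) -> cantor_select a = x.
Proof.
move=> never; rewrite /cantor_select; case: pselect => // -[i ai].
by have := never i; rewrite ai.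
Qed.

Lemma cantor_select_zero : cantor_select zero_seq = x.
Proof. exact: cantor_select_none. Qed.

Lemma cantor_select_pad i a : cantor_select (pad_seq i a) = xs i.
Proof.
apply: cantor_select_first; first by rewrite /pad_seq ltnn eqxx.
by move=> j ji; rewrite /pad_seq ji.
Qed.

End CantorSelect.

Lemma cantor_select_continuous (T : topologicalType) (x : T) (xs : nat -> T) :
  xs @ \oo --> x -> continuous (cantor_select x xs).
Proof.
move=> xs_x a W /= aW; have [h|none] := pselect (exists i, a i).
  have [i ai i_min] := ex_minnP h.
  have before_i j : (j < i)%N -> ~~ a j.
    by move=> ji; apply/negP => /i_min; rewrite leqNgt ji.
  apply: filterS (cantor_prefix_nbhs a i.+1) => b agree.
  rewrite /= (@cantor_select_first _ _ _ b i) ?agree //; last first.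
    by move=> j ji; rewrite agree ?before_i // (ltn_trans ji).
  by rewrite -(cantor_select_first x xs ai before_i); exact: nbhs_singleton.
have never j : ~~ a j by apply/negP => aj; apply: none; exists j.
rewrite cantor_select_none // in aW; have [n _ late_W] := xs_x W aW.
apply: filterS (cantor_prefix_nbhs a n) => b agree /=.
have b_never j : (j < n)%N -> ~~ b j by move=> jn; rewrite agree.
have [->|[i ni ->]] := cantor_select_late x xs b_never; last exact: late_W.
exact: nbhs_singleton.
Qed.

Section MetricSpace.
Variables (T : topologicalType) (d : T -> T -> Rdefinitions.R).
Hypotheses (d_metric : is_metric d) (d_compat : metric_compatible d).

Let d_refl x : d x x = 0. Proof. by have [_ d_eq0 _ _] := d_metric; exact/d_eq0. Qed.
Let d_sym x y : d x y = d y x. Proof. by have [] := d_metric. Qed.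
Let d_tri x y z : d x z <= d x y + d y z. Proof. by have [] := d_metric. Qed.

Lemma dball_center x e : 0 < e -> dball d x e x.
Proof. by rewrite /dball /= d_refl. Qed.

Lemma dball_open x e : open (dball d x e).
Proof.
apply/d_compat => y xy; exists (e - d x y); first by rewrite subr_gt0.
by move=> z yz; apply: le_lt_trans (d_tri x y z) _; rewrite -ltrBrDl.
Qed.

Lemma dball_nbhs x e : 0 < e -> nbhs x (dball d x e).
Proof. by move=> e0; apply: open_nbhs_nbhs; split; [exact: dball_open | exact: dball_center]. Qed.

Lemma nbhs_dball x W : nbhs x W -> exists2 e, 0 < e & dball d x e `<=` W.
Proof.
rewrite nbhsE => -[B [oB Bx] BW].
have [e e0 eB] := (proj1 (d_compat B) oB) x Bx.
by exists e => //; exact: subset_trans BW.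
Qed.

Let inv_natS_gt0 k : 0 < k.+1%:R^-1 :> Rdefinitions.R.
Proof. by rewrite invr_gt0 ltr0Sn. Qed.

Lemma dball_cvg x (u : nat -> T) :
  (forall k, d x (u k) < k.+1%:R^-1) -> u @ \oo --> x.
Proof.
move=> ux W /nbhs_dball[e e0 eW].
apply: filterS (near_infty_natSinv_lt (PosNum e0)) => k ke.
by apply: eW; exact: lt_trans (ux k) ke.
Qed.

Lemma separable_second_countable : separable_space T -> @second_countable T.
Proof.
move=> [D [D_count D_dense]].
exists [set dball d qk.1 qk.2.+1%:R^-1 | qk in D `*` [set: nat]].
  exact: sub_countable (card_image_le _ _) (countableX D_count (countableP _)).
split; first by move=> _ [[q k] _ <-]; exact: dball_open.
move=> x W /nbhs_dball[e e0 eW].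
have [k ke] := filter_ex (near_infty_natSinv_lt (PosNum (divr_gt0 e0 (@ltr0n _ 2)))).
have [q [xq Dq]] := D_dense (dball d x k.+1%:R^-1)
  (ex_intro _ x (dball_center x (inv_natS_gt0 k))) (dball_open x _).
exists (dball d q k.+1%:R^-1); first split.
- by exists (q, k).
- by rewrite /dball /= d_sym.
- move=> y qy; apply: eW; apply: le_lt_trans (d_tri x q y) _.
  by rewrite (splitr e) ltrD // (lt_trans _ ke).
Qed.

End MetricSpace.

Lemma polish_second_countable (T : topologicalType) :
  polish_space T -> @second_countable T.
Proof.
by move=> [T_sep [d [d_metric d_compat _]]]; exact: separable_second_countable d_compat T_sep.
Qed.

Lemma countable_enum (T : choiceType) (t0 : T) (R : set T) :
  countable R -> exists e : nat -> T, R `<=` range e /\ range e `<=` t0 |` R.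
Proof.
move=> /countable_injP[f f_inj].
exists (fun n => xget t0 [set t | R t /\ f t = n]); split.
  move=> t Rt; exists (f t) => //.
  have [Rt' ft'] := xgetPex t0 (ex_intro (fun t' => R t' /\ f t' = f t) t (conj Rt erefl)).
  by apply: f_inj; rewrite ?inE.
by move=> _ [n _ <-]; case: xgetP => [t -> [Rt _]|_]; [right | left].
Qed.

Section RectangleSeparation.
Variables (X Y : topologicalType) (A0 A1 : set (X * Y)).

Definition rectangle_separation : Prop :=
  exists (U : nat -> set X) (V : nat -> set Y),
    [/\ (forall n, open (U n) /\ open (V n)),
        A0 `<=` \bigcup_n (U n `*` V n) &
        (\bigcup_n (U n `*` V n)) `&` A1 = set0].

Definition cantor_reduction : Prop :=
  exists (f : cantor_space -> X) (g : cantor_space -> Y),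
    [/\ continuous f, continuous g,
        prod_map f g @` A01 `<=` A0 &
        prod_map f g @` A11 `<=` A1].

Lemma rectangle_separation_closure :
  rectangle_separation -> A0 `&` closure A1 = set0.
Proof.
move=> [U [V [UV_open A0_cover cover_A1]]].
apply/seteqP; split => // z [/A0_cover[n _ [zU zV]] clz].
have [U_open V_open] := UV_open n.
have [w [A1w [wU wV]]] : A1 `&` (U n `*` V n) !=set0.
  by apply: clz; exists (U n, V n) => //; split; exact: open_nbhs_nbhs.
suff : ((\bigcup_n (U n `*` V n)) `&` A1) w by rewrite cover_A1.
by split => //; exists n.
Qed.

Lemma closure_rectangle_separation :
  @second_countable X -> @second_countable Y ->
  A0 `&` closure A1 = set0 -> rectangle_separation.
Proof.
move=> [BX BX_count [BX_open BX_basis]] [BY BY_count [BY_open BY_basis]] A0_clA1.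
pose R := [set p : set X * set Y | [/\ BX p.1, BY p.2 & (p.1 `*` p.2) `&` A1 = set0]].
have R_count : countable R.
  apply: sub_countable (countableX BX_count BY_count).
  by apply: subset_card_le => p [].
have [e [R_e e_R]] := countable_enum (set0, set0) R_count.
exists (fst \o e), (snd \o e); split.
- move=> n; have /e_R[/= ->|[/BX_open U_open /BY_open V_open _]] : range e (e n) by exists n.
    by split; exact: open0.
  by split.
- move=> z A0z.
  have /existsNP[B /not_implyP[zB A1B]] : ~ closure A1 z.
    by move=> clz; rewrite -[False]/(@set0 (X * Y) z) -A0_clA1.
  case: zB => -[P Q] [/= zP zQ] PQB.
  have [U [BXU Uz] UP] := BX_basis z.1 P zP.
  have [V [BYV Vz] VQ] := BY_basis z.2 Q zQ.
  have [n _ en] : range e (U, V).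
    apply: R_e; split => //; apply/seteqP; split => // w [[wU wV] A1w].
    by apply: A1B; exists w; split => //; apply: PQB; split; [exact: UP | exact: VQ].
  by exists n => //=; rewrite en.
- apply/seteqP; split => // w [[n _ [wU wV]] A1w].
  have /e_R[/= en|[_ _ eA1]] : range e (e n) by exists n.
    by rewrite /= en in wU.
  by rewrite -eA1.
Qed.

Lemma cantor_reduction_closure : cantor_reduction -> A0 `&` closure A1 !=set0.
Proof.
move=> [f [g [f_cont g_cont f_A0 g_A1]]].
exists (f zero_seq, g zero_seq); split; first by apply: f_A0; exists (zero_seq, zero_seq).
move=> B [[P Q] [/= fP gQ] PQB].
have f_pad : \forall n \near \oo, P (f (pad_seq n zero_seq)).
  exact: cvg_comp pad_seq_zero_cvg (f_cont zero_seq) _ fP.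
have g_pad : \forall n \near \oo, Q (g (pad_seq n zero_seq)).
  exact: cvg_comp pad_seq_zero_cvg (g_cont zero_seq) _ gQ.
have [n [Pn Qn]] := filter_ex (filterI f_pad g_pad).
exists (f (pad_seq n zero_seq), g (pad_seq n zero_seq)); split; last exact: PQB.
apply: g_A1; exists (pad_seq n zero_seq, pad_seq n zero_seq) => //.
by exists n, zero_seq, zero_seq.
Qed.

Lemma closure_cantor_reduction :
  polish_space X -> polish_space Y -> A0 `&` closure A1 !=set0 -> cantor_reduction.
Proof.
move=> [_ [dX [dX_metric dX_compat _]]] [_ [dY [dY_metric dY_compat _]]].
move=> [[x y] [A0xy clxy]].
have near_A1 k : exists w, [/\ A1 w, dX x w.1 < k.+1%:R^-1 & dY y w.2 < k.+1%:R^-1].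
  have r_gt0 : 0 < k.+1%:R^-1 :> Rdefinitions.R by rewrite invr_gt0 ltr0Sn.
  have [|w [A1w [wx wy]]] := clxy (dball dX x k.+1%:R^-1 `*` dball dY y k.+1%:R^-1).
    by exists (dball dX x k.+1%:R^-1, dball dY y k.+1%:R^-1) => //; split; exact: dball_nbhs.
  by exists w.
have [w w_A1] := choice near_A1.
exists (cantor_select x (fst \o w)), (cantor_select y (snd \o w)); split.
- by apply/cantor_select_continuous/(dball_cvg dX_compat) => k; have [] := w_A1 k.
- by apply/cantor_select_continuous/(dball_cvg dY_compat) => k; have [] := w_A1 k.
- by move=> _ [_ -> <-]; rewrite /prod_map /= !cantor_select_zero.
- move=> _ [_ [i [a [b ->]]] <-]; rewrite /prod_map /= !cantor_select_pad.
  by have [] := w_A1 i; rewrite -surjective_pairing.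
Qed.

End RectangleSeparation.

Theorem corollary3p8 (X Y : topologicalType)
  (hX : polish_space X) (hY : polish_space Y)
  (A0 A1 : set (X * Y)) (hdisj : A0 `&` A1 = set0) :
  let alt_a := exists (U : nat -> set X) (V : nat -> set Y),
      [/\ (forall n, open (U n) /\ open (V n)),
          A0 `<=` \bigcup_n (U n `*` V n) &
          (\bigcup_n (U n `*` V n)) `&` A1 = set0] in
  let alt_b := exists (f : cantor_space -> X) (g : cantor_space -> Y),
      [/\ continuous f, continuous g,
          prod_map f g @` A01 `<=` A0 &
          prod_map f g @` A11 `<=` A1] in
  (alt_a \/ alt_b) /\ ~ (alt_a /\ alt_b).
Proof.
(* The dichotomy holds without the disjointness hypothesis [hdisj]. *)
move=> alt_a alt_b.
have sepE : alt_a <-> A0 `&` closure A1 = set0.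
  split; first exact: rectangle_separation_closure.
  by apply: closure_rectangle_separation; exact: polish_second_countable.
have redE : alt_b <-> A0 `&` closure A1 !=set0.
  by split; [exact: cantor_reduction_closure | exact: closure_cantor_reduction].
split; last by move=> [/sepE cl0 /redE[z]]; rewrite cl0.
have [cl0|/eqP/set0P cl] := pselect (A0 `&` closure A1 = set0).
  by left; exact/sepE.
by right; exact/redE.
Qed.
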